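(* Fix $N\in\mathbb N$ and $p\in\mathbb N$. Let $X_k^\star=\sum_{j=-2}^{N-1}x_k^{j,\star}\phi^j$ be the optimal state of the stochastic LQ problem described in the context, where $x^{j,\star}$ is the optimal state trajectory of the coefficient problem $\mathcal P_j$, and define the moving-horizon truncation $X_k^{\mathrm{trun},\star}:=\sum_{j\in\{-2,-1\}\cup\{\max(0,k-p),\dots,k-1\}}x_k^{j,\star}\phi^j$. Then for $k\in\{0,\dots,N-1\}$ the truncation error $\Delta X_k(p+2):=X_k^\star-X_k^{\mathrm{trun},\star}$ satisfies $$\Delta X_k(p+2)=\begin{cases}0, & k\le p,\\ \sum_{j=0}^{k-p-1}\bar A_{j+1}^{k-1}Ew^0\phi^j, & \text{otherwise}.\end{cases}$$
   Context: Matrices $A\in\mathbb R^{n_x\times n_x}$, $B\in\mathbb R^{n_x\times n_u}$, $E\in\mathbb R^{n_x\times1}$; $Q_N,Q\succeq0$, $R\succ0$; $(A,B)$ stabilizable, $(A,Q^{1/2})$ detectable. There are independent random variables $\xi_{\mathrm{ini}},\xi_0,\xi_1,\dots$ ($\xi_0,\xi_1,\dots$ i.i.d.) and real functions $\varphi^1,\psi^1$ such that $\phi^{-2}:=1$, $\phi^{-1}:=\varphi^1(\xi_{\mathrm{ini}})$, $\phi^j:=\psi^1(\xi_j)$ ($j\ge0$) have zero mean and finite nonzero second moment for $j\ge-1$. The system is $X_{k+1}=AX_k+BU_k+EW_k$, $X_0=X_{\mathrm{ini}}=x^{-2}_{\mathrm{ini}}+x^{-1}_{\mathrm{ini}}\phi^{-1}$,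 with scalar i.i.d. disturbances $W_k=\mathbb E[W]+w^0\phi^k$, $w^0\in\mathbb R$; inputs $U_k$ are square integrable and measurable w.r.t. $\sigma(X_i,i\le k)$; the stochastic LQ problem minimizes $\mathbb E[X_N^\top Q_NX_N]+\sum_{k=0}^{N-1}\mathbb E[X_k^\top QX_k+U_k^\top RU_k]$. Coefficient problem $\mathcal P_j$ ($j\in\{-2,\dots,N-1\}$): minimize $x_N^{j\top}Q_Nx_N^j+\sum_{k=0}^{N-1}(x_k^{j\top}Qx_k^j+u_k^{j\top}Ru_k^j)$ s.t. $x^j_{k+1}=Ax^j_k+Bu^j_k+Ew^j_k$, $x^j_0=x^j_{\mathrm{ini}}$ ($x^j_{\mathrm{ini}}=0$ for $j\ge0$), and $u^j_k=0$ for $k\le j$ when $j\ge 0$, where $w^{-2}_k=\mathbb E[W]$, $w^{-1}_k=0$, $w^j_k=w^0$ if $k=j$ and $0$ otherwise for $j\ge0$. Riccati recursion: $P_0=Q_N$, and for $k\ge1$: $K_k=-(R+B^\top P_{k-1}B)^{-1}B^\top P_{k-1}A$, $P_k=Q+A^\top(P_{k-1}-P_{k-1}B(R+B^\top P_{k-1}B)^{-1}B^\top P_{k-1})A$. For integers $k_1,k_2$: $\bar A_{k_1}^{k_2}:=(A+BK_{N-k_2})\cdots(A+BK_{N-k_1})$ (larger $k$ to the left) if $0\le k_1\le k_2$, and $I$ otherwise. *)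

From mathcomp Require Import all_boot all_order all_algebra.
From mathcomp Require Import reals.
Set Implicit Arguments. Unset Strict Implicit. Unset Printing Implicit Defensive.
Import Order.TTheory GRing.Theory Num.Theory.
Local Open Scope ring_scope.

Section LQ.
Variable R : realType.

Definition qf n (M : 'M[R]_n) (v : 'cV[R]_n) : R := (v^T *m M *m v) ord0 ord0.

Definition psd n (M : 'M[R]_n) : Prop := M^T = M /\ forall v, 0 <= qf M v.
Definition pd n (M : 'M[R]_n) : Prop := M^T = M /\ forall v, v != 0 -> 0 < qf M v.

Definition schur_stable n (M : 'M[R]_n) : Prop :=
  forall eps : R, 0 < eps -> exists K0 : nat, forall k : nat, (K0 <= k)%N ->
    forall i j, `|(M ^+ k) i j| < eps.

Definition stabilizable nx nu (A : 'M[R]_nx) (B : 'M[R]_(nx, nu)) : Prop :=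
  exists K : 'M[R]_(nu, nx), schur_stable (A + B *m K).

Definition detectable nx ny (A : 'M[R]_nx) (C : 'M[R]_(ny, nx)) : Prop :=
  exists L : 'M[R]_(nx, ny), schur_stable (A + L *m C).

(* (A, Q^{1/2}) detectable: stated with the PSD square root S of Q
   (S psd, S *m S = Q). *)
Definition detectable_sqrt nx (A Q : 'M[R]_nx) : Prop :=
  exists S : 'M[R]_nx, psd S /\ S *m S = Q /\ detectable A S.

Variables (nx nu : nat) (A : 'M[R]_nx) (B : 'M[R]_(nx, nu)) (E : 'cV[R]_nx)
          (QN Q : 'M[R]_nx) (Rc : 'M[R]_nu) (N : nat).

Fixpoint ricP (k : nat) : 'M[R]_nx :=
  match k with
  | 0 => QN
  | k'.+1 => let P := ricP k' in
      Q + A^T *m (P - P *m B *m invmx (Rc + B^T *m P *m B) *m B^T *m P) *m A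
  end.

(* K_k for k >= 1 *)
Definition ricK (k : nat) : 'M[R]_(nu, nx) :=
  - (invmx (Rc + B^T *m ricP k.-1 *m B) *m B^T *m ricP k.-1 *m A).

Definition Acl (k : nat) : 'M[R]_nx := A + B *m ricK (N - k).

Fixpoint abar_aux (k2 m : nat) : 'M[R]_nx :=
  match m with
  | 0 => 1%:M
  | m'.+1 => Acl k2 *m abar_aux k2.-1 m'
  end.

(* \bar A_{k1}^{k2} = (A+BK_{N-k2}) ... (A+BK_{N-k1}) if k1 <= k2, I otherwise
   (arguments are nat, so 0 <= k1 holds automatically). *)
Definition Abar (k1 k2 : nat) : 'M[R]_nx :=
  if (k1 <= k2)%N then abar_aux k2 (k2 - k1).+1 else 1%:M.

Definition lq_feasible (x0 : 'cV[R]_nx) (w : nat -> R) (fixed : nat -> bool)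
  (x : nat -> 'cV[R]_nx) (u : nat -> 'cV[R]_nu) : Prop :=
  x 0%N = x0 /\
  (forall k, (k < N)%N -> x k.+1 = A *m x k + B *m u k + w k *: E) /\
  (forall k, (k < N)%N -> fixed k -> u k = 0).

Definition lq_cost (x : nat -> 'cV[R]_nx) (u : nat -> 'cV[R]_nu) : R :=
  qf QN (x N) + \sum_(k < N) (qf Q (x k) + qf Rc (u k)).

Definition lq_optimal x0 w fixed x u : Prop :=
  lq_feasible x0 w fixed x u /\
  forall x' u', lq_feasible x0 w fixed x' u' -> lq_cost x u <= lq_cost x' u'.

(* Coefficient problem P_j, j in {-2, ..., N-1} (as an int). *)
Variables (xm2 xm1 : 'cV[R]_nx) (EW w0 : R).

Definition coef_xini (j : int) : 'cV[R]_nx :=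
  if j == -2 then xm2 else if j == -1 then xm1 else 0.

Definition coef_w (j : int) (k : nat) : R :=
  if j == -2 then EW else if j == -1 then 0
  else if k%:Z == j then w0 else 0.

Definition coef_fixed (j : int) (k : nat) : bool := (0 <= j) && (k%:Z <= j).

Definition coef_optimal (j : int) x u : Prop :=
  lq_optimal (coef_xini j) (coef_w j) (coef_fixed j) x u.

Definition Xstar (Omega : Type) (phi : int -> Omega -> R)
  (xs : int -> nat -> 'cV[R]_nx) (k : nat) (om : Omega) : 'cV[R]_nx :=
  \sum_(0 <= i < N + 2) phi (i%:Z - 2) om *: xs (i%:Z - 2) k.

Definition Xtrun (p : nat) (Omega : Type) (phi : int -> Omega -> R)
  (xs : int -> nat -> 'cV[R]_nx) (k : nat) (om : Omega) : 'cV[R]_nx :=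
  phi (-2) om *: xs (-2) k + phi (-1) om *: xs (-1) k
  + \sum_(maxn 0 (k - p) <= i < k) phi i%:Z om *: xs i%:Z k.

End LQ.

From mathcomp Require Import all_boot all_order all_algebra.
From mathcomp Require Import reals lra zify.
Set Implicit Arguments. Unset Strict Implicit. Unset Printing Implicit Defensive.
Import Order.TTheory GRing.Theory Num.Theory.
Local Open Scope ring_scope.

(* For j >= 0 the coefficient problem P_j starts at rest and receives the single
   impulse w0 E at time j, so x^j vanishes up to time j and x^j_{j+1} = w0 E.
   Completing the square along the Riccati recursion writes its cost as the
   fixed cost of that state plus squares (u_i - K x_i) weighted by the positive
   definite R + B^T P B; optimality forces every square to vanish, hence the
   optimal input is the Riccati feedback and x^j_k = \bar A_{j+1}^{k-1} E w0
   for k > j.  In X^* - X^trun only the coefficients j < k - p survive, and the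
   coefficients j >= k vanish at time k. *)

Section QuadraticForm.
Variable R : realType.

Lemma qf0 n (M : 'M[R]_n) : qf M 0 = 0.
Proof. by rewrite /qf mulmx0 mxE. Qed.

Lemma qfDl n (M1 M2 : 'M[R]_n) v : qf (M1 + M2) v = qf M1 v + qf M2 v.
Proof. by rewrite /qf mulmxDr mulmxDl mxE. Qed.

Lemma qf_congr m n (M : 'M[R]_m) (C : 'M[R]_(m, n)) v :
  qf (C^T *m M *m C) v = qf M (C *m v).
Proof. by rewrite /qf trmx_mul !mulmxA. Qed.

Lemma psd_congr m n (M : 'M[R]_m) (C : 'M[R]_(m, n)) : psd M -> psd (C^T *m M *m C).
Proof.
move=> [MT M_ge0]; split=> [|v]; last by rewrite qf_congr.
by rewrite !trmx_mul trmxK MT mulmxA.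
Qed.

Lemma pd_addr_psd n (M1 M2 : 'M[R]_n) : pd M1 -> psd M2 -> pd (M1 + M2).
Proof.
move=> [M1T M1_gt0] [M2T M2_ge0]; split=> [|v v_neq0].
  by rewrite linearD /= M1T M2T.
by rewrite qfDl ltr_wpDr ?M1_gt0 ?M2_ge0.
Qed.

Lemma pd_psd n (M : 'M[R]_n) : pd M -> psd M.
Proof.
move=> [MT M_gt0]; split=> // v.
by have [->|/M_gt0/ltW//] := eqVneq v 0; rewrite qf0.
Qed.

Lemma pd_unitmx n (M : 'M[R]_n) : pd M -> M \in unitmx.
Proof.
move=> [_ M_gt0]; rewrite unitmxE unitfE; apply/negP => /det0P [v v_neq0 vM].
have := M_gt0 v^T; rewrite trmx_eq0 v_neq0 => /(_ isT).
by rewrite /qf trmxK vM mul0mx mxE ltxx.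
Qed.

Lemma quad_form_shift n (G : 'M[R]_n) (u z : 'cV[R]_n) :
  G \in unitmx -> G^T = G ->
  (u + invmx G *m z)^T *m G *m (u + invmx G *m z) =
  u^T *m G *m u + u^T *m z + z^T *m u + z^T *m invmx G *m z.
Proof.
move=> G_unit GT; have GiT : (invmx G)^T = invmx G by rewrite trmx_inv GT.
rewrite [(u + _)^T]linearD /= trmx_mul GiT !mulmxDl !mulmxDr !mulmxA.
by rewrite !(mulmxKV, mulmxK) // !addrA.
Qed.

End QuadraticForm.

Section CompleteSquare.
Variable R : realType.
Variables (nx nu : nat) (A : 'M[R]_nx) (B : 'M[R]_(nx, nu)) (Q P : 'M[R]_nx)
  (Rc : 'M[R]_nu).
Hypotheses (hP : psd P) (hRc : pd Rc).

Local Notation G := (Rc + B^T *m P *m B).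

Lemma qf_complete_square x u :
  qf Q x + qf Rc u + qf P (A *m x + B *m u) =
  qf (Q + A^T *m (P - P *m B *m invmx G *m B^T *m P) *m A) x
  + qf G (u + invmx G *m B^T *m P *m A *m x).
Proof.
have G_pd : pd G by apply: pd_addr_psd; last exact: psd_congr.
have G_unit : G \in unitmx := pd_unitmx G_pd.
have -> : invmx G *m B^T *m P *m A *m x = invmx G *m (B^T *m P *m A *m x).
  by rewrite !mulmxA.
rewrite /qf quad_form_shift //; last exact: G_pd.1.
rewrite [(_ + _)^T]linearD /= !trmx_mul !trmxK hP.1.
rewrite !(mulmxDl, mulmxDr, mulmxBl, mulmxBr) !(mulmxN, mulNmx) !mulmxA.
have entryD (M1 M2 : 'M[R]_1) : (M1 + M2) ord0 ord0 = M1 ord0 ord0 + M2 ord0 ord0.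
  by rewrite mxE.
have entryN (M : 'M[R]_1) : (- M) ord0 ord0 = - M ord0 ord0 by rewrite mxE.
rewrite !(entryD, entryN); lra.
Qed.

End CompleteSquare.

Section Riccati.
Variable R : realType.
Variables (nx nu : nat) (A : 'M[R]_nx) (B : 'M[R]_(nx, nu)) (QN Q : 'M[R]_nx)
  (Rc : 'M[R]_nu).
Hypotheses (hQN : psd QN) (hQ : psd Q) (hRc : pd Rc).

Local Notation P k := (ricP A B QN Q Rc k).
Local Notation G k := (Rc + B^T *m P k *m B).
Local Notation K k := (ricK A B QN Q Rc k).

Lemma ricP_psd k : psd (P k).
Proof.
elim: k => [|k P_psd] //=; split=> [|x].
  have GT : (G k)^T = G k := (pd_addr_psd hRc (psd_congr B P_psd)).1.
  rewrite linearD /= hQ.1 !trmx_mul trmxK linearB /= !trmx_mul !trmxK P_psd.1.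
  by rewrite trmx_inv GT !mulmxA.
set u := - (invmx (G k) *m B^T *m P k *m A *m x).
have := qf_complete_square A B Q P_psd hRc x u.
rewrite addNr qf0 addr0 => <-.
by rewrite !addr_ge0 ?hQ.2 ?P_psd.2 ?(pd_psd hRc).2.
Qed.

Lemma ricG_pd k : pd (G k).
Proof. exact: pd_addr_psd hRc (psd_congr B (ricP_psd k)). Qed.

Lemma ricP_step k x u :
  qf Q x + qf Rc u + qf (P k) (A *m x + B *m u) =
  qf (P k.+1) x + qf (G k) (u - K k.+1 *m x).
Proof.
have -> : u - K k.+1 *m x = u + invmx (G k) *m B^T *m P k *m A *m x.
  (* the opposite inside [ricK] is elaborated through another instance path
     of [R]; [mulNmx] only matches it once [R] is given explicitly *)
  by rewrite /ricK (mulNmx (R := R)) opprK.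
by rewrite qf_complete_square //; apply: ricP_psd.
Qed.

Lemma lq_cost_to_go N (x : nat -> 'cV[R]_nx) (u : nat -> 'cV[R]_nu) m :
  (m <= N)%N -> (forall i, (m <= i < N)%N -> x i.+1 = A *m x i + B *m u i) ->
  qf QN (x N) + \sum_(m <= i < N) (qf Q (x i) + qf Rc (u i)) =
  qf (P (N - m)) (x m) + \sum_(m <= i < N) qf (G (N - i).-1) (u i - K (N - i) *m x i).
Proof.
move Ed : (N - m)%N => d; elim: d m Ed => [|d IH] m Ed mN dyn.
  have -> : m = N by lia.
  by rewrite !big_geq.
have mN' : (m < N)%N by lia.
rewrite [in LHS]big_ltn // [in RHS]big_ltn // addrCA IH; last 3 first.
- lia.
- exact: mN'.
- by move=> i /andP [mi iN]; apply: dyn; rewrite iN ltnW.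
by rewrite dyn ?leqnn // Ed !addrA ricP_step.
Qed.

End Riccati.

Section ClosedLoop.
Variable R : realType.
Variables (nx nu : nat) (A : 'M[R]_nx) (B : 'M[R]_(nx, nu)) (QN Q : 'M[R]_nx)
  (Rc : 'M[R]_nu) (N : nat).

Local Notation Abar := (Abar A B QN Q Rc N).

Lemma Abar_recl k1 k : (0 < k1 <= k)%N ->
  Abar k1 k = Acl A B QN Q Rc N k *m Abar k1 k.-1.
Proof.
case: k => [|k] /andP [k1_gt0 k1_le]; first by lia.
rewrite /Abar k1_le /=; case: leqP => [k1_le' | k_lt].
  by rewrite subSn.
by have -> : (k.+1 - k1)%N = 0%N by lia.
Qed.

End ClosedLoop.

Section CoefficientData.
Variable R : realType.
Variables (EW w0 : R) (j : nat).

Lemma coef_w_nat i : coef_w EW w0 j%:Z i = if i == j then w0 else 0.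
Proof. by []. Qed.

Lemma coef_fixed_nat i : coef_fixed j%:Z i = (i <= j)%N.
Proof. by []. Qed.

End CoefficientData.

Section ImpulseProblem.
Variable R : realType.
Variables (nx nu : nat) (A : 'M[R]_nx) (B : 'M[R]_(nx, nu)) (E : 'cV[R]_nx)
  (QN Q : 'M[R]_nx) (Rc : 'M[R]_nu) (N : nat) (xm2 xm1 : 'cV[R]_nx) (EW w0 : R).
Hypotheses (hQN : psd QN) (hQ : psd Q) (hRc : pd Rc).
Variable j : nat.
Hypothesis j_lt_N : (j < N)%N.

Local Notation P k := (ricP A B QN Q Rc k).
Local Notation G k := (Rc + B^T *m P k *m B).
Local Notation K k := (ricK A B QN Q Rc k).
Local Notation feasible := (lq_feasible A B E N (coef_xini xm2 xm1 j%:Z)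
  (coef_w EW w0 j%:Z) (coef_fixed j%:Z)).
Local Notation optimal := (coef_optimal A B E QN Q Rc N xm2 xm1 EW w0 j%:Z).

Section Feasible.
Variables (x : nat -> 'cV[R]_nx) (u : nat -> 'cV[R]_nu).
Hypothesis x_u_feasible : feasible x u.

Lemma coef_feasible_state_before i : (i <= j)%N -> x i = 0.
Proof.
have [x0 [dyn fixed]] := x_u_feasible.
elim: i => [//|i IH] i_lt_j.
have i_lt_N : (i < N)%N by lia.
rewrite dyn // IH ?fixed ?coef_fixed_nat ?coef_w_nat ?(ltnW i_lt_j) //.
by rewrite ifN ?neq_ltn ?i_lt_j // !mulmx0 scale0r !addr0.
Qed.

Lemma coef_feasible_state_impulse : x j.+1 = w0 *: E.
Proof.
have [_ [dyn fixed]] := x_u_feasible.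
rewrite dyn // coef_feasible_state_before // fixed ?coef_fixed_nat //.
by rewrite coef_w_nat eqxx !mulmx0 !add0r.
Qed.

Lemma coef_feasible_cost : lq_cost QN Q Rc N x u =
  qf (P (N - j.+1)) (w0 *: E) +
  \sum_(j.+1 <= i < N) qf (G (N - i).-1) (u i - K (N - i) *m x i).
Proof.
have [_ [dyn fixed]] := x_u_feasible.
rewrite /lq_cost -(big_mkord xpredT (fun i => qf Q (x i) + qf Rc (u i))).
rewrite (big_cat_nat (n := j.+1)) //= big_nat_cond big1 ?add0r; last first.
  move=> i /andP [/andP [_ i_le_j] _].
  by rewrite coef_feasible_state_before ?fixed ?coef_fixed_nat ?qf0 ?addr0 //; lia.
rewrite (lq_cost_to_go (A := A) (B := B) hQN hQ hRc) // ?coef_feasible_state_impulse //.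
move=> i /andP [j_lt_i i_lt_N].
by rewrite dyn // coef_w_nat ifN ?scale0r ?addr0 // neq_ltn j_lt_i orbT.
Qed.

End Feasible.

Definition coef_feedback i (y : 'cV[R]_nx) : 'cV[R]_nu :=
  if (i <= j)%N then 0 else K (N - i) *m y.

Fixpoint coef_feedback_state i : 'cV[R]_nx :=
  if i is i'.+1 then
    A *m coef_feedback_state i' + B *m coef_feedback i' (coef_feedback_state i')
    + coef_w EW w0 j%:Z i' *: E
  else 0.

Lemma coef_feedback_feasible :
  feasible coef_feedback_state (fun i => coef_feedback i (coef_feedback_state i)).
Proof. by do 2!split=> //; move=> i _; rewrite coef_fixed_nat /coef_feedback => ->. Qed.

Lemma coef_optimal_feedback x u : optimal x u ->
  forall i, (j < i < N)%N -> u i = K (N - i) *m x i.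
Proof.
move=> [x_u_feasible x_u_min] i /andP [j_lt_i i_lt_N].
have G_pd l : pd (G l) := ricG_pd A B hQN hQ hRc l.
have G_qf_ge0 l v : 0 <= qf (G l) v by apply: (pd_psd (G_pd l)).2.
have feedback_cost : lq_cost QN Q Rc N coef_feedback_state
    (fun l => coef_feedback l (coef_feedback_state l)) = qf (P (N - j.+1)) (w0 *: E).
  rewrite coef_feasible_cost; last exact: coef_feedback_feasible.
  rewrite big_nat_cond big1 ?addr0 // => l /andP [/andP [j_lt_l _] _].
  by rewrite /coef_feedback leqNgt j_lt_l subrr qf0.
have := x_u_min _ _ coef_feedback_feasible.
rewrite feedback_cost coef_feasible_cost // gerDl => squares_le0.
have : \sum_(j.+1 <= l < N) qf (G (N - l).-1) (u l - K (N - l) *m x l) == 0.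
  by rewrite eq_le squares_le0 sumr_ge0.
rewrite psumr_eq0 // => /allP /(_ i); rewrite mem_index_iota j_lt_i i_lt_N.
move=> /(_ isT) /eqP square_eq0; apply/eqP; rewrite -subr_eq0; apply/negPn/negP.
by move=> /(G_pd (N - i).-1).2; rewrite square_eq0 ltxx.
Qed.

Lemma coef_optimal_state x u : optimal x u ->
  forall k, (j < k <= N)%N -> x k = w0 *: (Abar A B QN Q Rc N j.+1 k.-1 *m E).
Proof.
move=> x_u_opt; have [[_ [dyn _]] _] := x_u_opt.
elim=> [//|k IH] /andP [j_le_k k_lt_N].
have [-> | k_neq_j] := eqVneq k j.
  by rewrite (coef_feasible_state_impulse x_u_opt.1) /Abar ltnn mul1mx.
have j_lt_k : (j < k)%N by lia.
rewrite dyn // (coef_optimal_feedback x_u_opt) ?j_lt_k // IH; last by rewrite j_lt_k ltnW.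
rewrite coef_w_nat (negbTE k_neq_j) scale0r addr0 [in RHS]Abar_recl //=.
by rewrite /Acl -!scalemxAr -!mulmxA mulmxDl scalerDr !mulmxA.
Qed.

End ImpulseProblem.

Lemma XstarE (R : realType) (nx N : nat) (Omega : Type) (phi : int -> Omega -> R)
    (xs : int -> nat -> 'cV[R]_nx) k om :
  Xstar N phi xs k om = phi (-2) om *: xs (-2) k + phi (-1) om *: xs (-1) k
    + \sum_(0 <= i < N) phi i%:Z om *: xs i%:Z k.
Proof.
rewrite /Xstar addn2 !big_nat_recl // addrA; congr (_ + _ + _).
by apply: eq_bigr => i _; rewrite -addn2 PoszD addrK.
Qed.

Theorem lemma2 (R : realType) (nx nu : nat)
  (A : 'M[R]_nx) (B : 'M[R]_(nx, nu)) (E : 'cV[R]_nx)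
  (QN Q : 'M[R]_nx) (Rc : 'M[R]_nu)
  (hQN : psd QN) (hQ : psd Q) (hR : pd Rc)
  (hstab : stabilizable A B) (hdet : detectable_sqrt A Q)
  (N p : nat) (xm2 xm1 : 'cV[R]_nx) (EW w0 : R)
  (Omega : Type) (phi : int -> Omega -> R)
  (xs : int -> nat -> 'cV[R]_nx) (us : int -> nat -> 'cV[R]_nu)
  (hopt : forall j : int, -2 <= j <= (N%:Z - 1) ->
     coef_optimal A B E QN Q Rc N xm2 xm1 EW w0 j (xs j) (us j))
  (k : nat) (hk : (k < N)%N) (om : Omega) :
  Xstar N phi xs k om - Xtrun p phi xs k om =
  (if (k <= p)%N then 0
   else \sum_(0 <= j < k - p) (w0 * phi j%:Z om) *:
          (Abar A B QN Q Rc N (j.+1) k.-1 *m E)).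
Proof.
have opt i : (i < N)%N ->
    coef_optimal A B E QN Q Rc N xm2 xm1 EW w0 i%:Z (xs i%:Z) (us i%:Z).
  by move=> i_lt_N; apply: hopt; apply/andP; split; lia.
have tail_eq0 : \sum_(k <= i < N) phi i%:Z om *: xs i%:Z k = 0.
  rewrite big_nat_cond big1 // => i /andP [/andP [k_le_i i_lt_N] _].
  by rewrite (coef_feasible_state_before i_lt_N (opt i i_lt_N).1 k_le_i) scaler0.
rewrite XstarE /Xtrun max0n (big_cat_nat (n := k)) ?(ltnW hk) //= tail_eq0 addr0.
rewrite [\sum_(0 <= i < k) _](big_cat_nat (n := k - p)) ?leq_subr //= addrCA addrK.
case: leqP => [k_le_p | p_lt_k]; first by rewrite big_geq // leqn0 subn_eq0.
apply: eq_big_nat => i /andP [_ i_lt_kp].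
have i_lt_N : (i < N)%N by lia.
rewrite (coef_optimal_state hQN hQ hR i_lt_N (opt i i_lt_N)); last lia.
by rewrite scalerA mulrC.
Qed.
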